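(* Let $0<\lambda<\frac{5-\sqrt{21}}{2}$ and let $K$ be the attractor of the IFS $f_1(x)=\lambda x$, $f_2(x)=\lambda x+2\lambda$, $f_3(x)=\lambda x+3\lambda-\lambda^2$, $f_4(x)=\lambda x+1-\lambda$. Then $$\dim_H(U_2)=\dim_H\big(U_1\cap(U_1+1-\lambda)\big)=\dim_H(U_1),$$ where $U_1+1-\lambda=\{x+1-\lambda:x\in U_1\}$. Moreover, $U_1\cap(U_1+1-\lambda)$ is exactly the set of points of $K$ having a unique coding and whose unique coding begins with the digit $4$.
   Context: A coding of $x\in K$ is a sequence $(i_n)\in\{1,2,3,4\}^{\mathbb{N}}$ with $x=\lim_{n\to\infty}f_{i_1}\circ\cdots\circ f_{i_n}(0)$. $U_k$ denotes the set of $x\in K$ having exactly $k$ distinct codings. *)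

From Stdlib Require Import Reals Lra List.
Open Scope R_scope.

Definition ifs (lam : R) (i : nat) (x : R) : R :=
  match i with
  | 1%nat => lam * x
  | 2%nat => lam * x + 2 * lam
  | 3%nat => lam * x + 3 * lam - lam ^ 2
  | _ => lam * x + 1 - lam
  end.

Fixpoint comp (lam : R) (c : nat -> nat) (n : nat) (y : R) : R :=
  match n with
  | O => y
  | S m => ifs lam (c O) (comp lam (fun k => c (S k)) m y)
  end.

Definition is_digit_seq (c : nat -> nat) : Prop :=
  forall n, (1 <= c n <= 4)%nat.

Definition is_coding (lam : R) (c : nat -> nat) (x : R) : Prop :=
  is_digit_seq c /\ Un_cv (fun n => comp lam c n 0) x.

(* The attractor K = set of points possessing a coding *)
Definition K (lam : R) (x : R) : Prop := exists c, is_coding lam c x.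

Definition seq_eq (c d : nat -> nat) : Prop := forall n, c n = d n.

(* x has exactly k distinct codings *)
Definition U (lam : R) (k : nat) (x : R) : Prop :=
  K lam x /\
  exists l : list (nat -> nat),
    length l = k /\
    (forall c, In c l -> is_coding lam c x) /\
    (forall i j, (i < j < k)%nat ->
       ~ seq_eq (nth i l (fun _ => O)) (nth j l (fun _ => O))) /\
    (forall c, is_coding lam c x -> exists d, In d l /\ seq_eq c d).

(* H^s(E) = 0, unfolded: for every eps, delta > 0 there is a countable cover of E
   by sets U_n of diameter <= r_n, 0 < r_n <= delta, with sum r_n^s <= eps. *)
Definition H_null (s : R) (E : R -> Prop) : Prop :=
  forall eps delta, 0 < eps -> 0 < delta ->
    exists (V : nat -> R -> Prop) (r : nat -> R),
      (forall n, 0 < r n <= delta) /\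
      (forall n x y, V n x -> V n y -> Rabs (x - y) <= r n) /\
      (forall x, E x -> exists n, V n x) /\
      (forall N, sum_f_R0 (fun n => Rpower (r n) s) N <= eps).

Definition is_lower_bound (A : R -> Prop) (m : R) : Prop :=
  forall s, A s -> m <= s.
Definition is_glb (A : R -> Prop) (m : R) : Prop :=
  is_lower_bound A m /\ (forall b, is_lower_bound A b -> b <= m).

Definition hausdorff_dim (E : R -> Prop) (d : R) : Prop :=
  is_glb (fun s => 0 <= s /\ H_null s E) d.

(* The pieces [f_i [0,1]] are pairwise disjoint except [f_2 [0,1]] and [f_3 [0,1]], whose overlap is
   [f_2 (f_4 [0,1]) = f_3 (f_1 [0,1])].  Stripping the common prefix of the two codings of a point of
   [U_2] therefore leaves a point [f_2 (f_4 z)] with [z] uniquely coded, so [U_2] is a countable union of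
   similar copies of [U_1], while conversely [f_2 (f_4 U_1)] lies in [U_2].  Likewise
   [f_4 U_1 ⊆ U_1 ∩ (U_1 + 1 - λ) ⊆ U_1 + 1 - λ].  Null sets of the [s]-dimensional Hausdorff measure are
   preserved by similarities and countable unions, so the three sets have the same null exponents and
   hence the same Hausdorff dimension.  Points of [U_1 ∩ (U_1 + 1 - λ)] lie in [f_4 [0,1]], which is met
   by no other piece. *)

From Stdlib Require Import Reals Lra Lia Psatz List Classical IndefiniteDescription.
Open Scope R_scope.

Lemma Rpower_gt0 x s : 0 < Rpower x s.
Proof. apply exp_pos. Qed.

Lemma H_null_subset s (E F : R -> Prop) :
  (forall x, E x -> F x) -> H_null s F -> H_null s E.
Proof.
intros HEF HF eps delta Heps Hdelta.
destruct (HF eps delta Heps Hdelta) as (V & r & Hr & Hdiam & Hcover & Hsum).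
exists V, r; split; [|split; [|split]]; auto.
Qed.

Lemma H_null_affine_image s a b (E : R -> Prop) : 0 < a -> H_null s E ->
  H_null s (fun x => exists y, E y /\ x = a * y + b).
Proof.
intros Ha HE eps delta Heps Hdelta.
set (C := Rpower a s); assert (HC : 0 < C) by apply Rpower_gt0.
destruct (HE (eps / C) (delta / a)) as (V & r & Hr & Hdiam & Hcover & Hsum);
  try (apply Rdiv_lt_0_compat; assumption).
exists (fun n x => exists y, V n y /\ x = a * y + b), (fun n => a * r n).
split; [|split; [|split]].
- intro n; specialize (Hr n); split; [apply Rmult_lt_0_compat; lra|].
  apply (Rmult_le_reg_l (/ a)); [now apply Rinv_0_lt_compat|].
  replace (/ a * (a * r n)) with (r n) by (field; lra).
  rewrite Rmult_comm; apply Hr.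
- intros n x y [x' [Hx ->]] [y' [Hy ->]].
  replace (a * x' + b - (a * y' + b)) with (a * (x' - y')) by ring.
  rewrite Rabs_mult, (Rabs_right a) by lra.
  apply Rmult_le_compat_l; [lra | now apply Hdiam].
- intros x [y [Hy ->]]. destruct (Hcover y Hy) as [n Hn]. now exists n, y.
- intro N.
  replace (sum_f_R0 (fun n => Rpower (a * r n) s) N)
    with (C * sum_f_R0 (fun n => Rpower (r n) s) N).
  + apply (Rmult_le_reg_l (/ C)); [now apply Rinv_0_lt_compat|].
    rewrite <- Rmult_assoc, Rinv_l, Rmult_1_l by lra.
    rewrite Rmult_comm; apply Hsum.
  + rewrite scal_sum; apply sum_eq; intros n _.
    unfold C; rewrite <- Rpower_mult_distr; [ring | exact Ha | apply Hr].
Qed.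

(* [pair_index k m = 2^k (2m+1) - 1]; it is decoded by reading off binary digits,
   and [S n] steps of fuel suffice to decode [n]. *)
Fixpoint pair_index (k m : nat) : nat :=
  match k with O => 2 * m | S k' => S (2 * pair_index k' m) end.

Fixpoint unpair_fuel (fuel n : nat) : option (nat * nat) :=
  match fuel with
  | O => None
  | S f => if Nat.even n then Some (O, Nat.div2 n)
           else option_map (fun p => (S (fst p), snd p)) (unpair_fuel f (Nat.div2 n))
  end.

Definition unpair (n : nat) : option (nat * nat) := unpair_fuel (S n) n.

Lemma even_succ_double m : Nat.even (S (2 * m)) = false.
Proof. rewrite <- Nat.add_1_r; apply Nat.even_odd. Qed.

Lemma div2_lt_succ n : (Nat.div2 (S n) < S n)%nat.
Proof. apply Nat.lt_div2; lia. Qed.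

Lemma unpair_fuel_pair_index k m fuel :
  (pair_index k m < fuel)%nat -> unpair_fuel fuel (pair_index k m) = Some (k, m).
Proof.
revert fuel; induction k as [|k IHk]; intros [|fuel] Hfuel;
  cbn [pair_index unpair_fuel] in *; try lia.
- now rewrite Nat.even_even, Nat.div2_double.
- rewrite even_succ_double, Nat.div2_succ_double, IHk by lia; reflexivity.
Qed.

Lemma unpair_fuel_stable fuel fuel' n :
  (n < fuel)%nat -> (n < fuel')%nat -> unpair_fuel fuel n = unpair_fuel fuel' n.
Proof.
revert fuel' n; induction fuel as [|fuel IH]; intros [|fuel'] n H H'; try lia.
cbn [unpair_fuel]; destruct (Nat.even n) eqn:Heven; [reflexivity|].
destruct n as [|n]; [discriminate|].
pose proof (div2_lt_succ n); rewrite (IH fuel') by lia; reflexivity.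
Qed.

Lemma unpair_fuel_defined fuel n : (n < fuel)%nat -> unpair_fuel fuel n <> None.
Proof.
revert n; induction fuel as [|fuel IH]; intros n H; [lia|].
cbn [unpair_fuel]; destruct (Nat.even n) eqn:Heven; [discriminate|].
destruct n as [|n]; [discriminate|].
pose proof (div2_lt_succ n).
destruct (unpair_fuel fuel _) eqn:Hp; [discriminate|].
exfalso; exact (IH (Nat.div2 (S n)) ltac:(lia) Hp).
Qed.

Lemma sum_f_R0_le_more (F : nat -> R) N M :
  (forall n, 0 <= F n) -> (N <= M)%nat -> sum_f_R0 F N <= sum_f_R0 F M.
Proof.
intros HF HNM; induction HNM as [|M _ IH]; [lra|].
simpl; specialize (HF (S M)); lra.
Qed.

Lemma sum_f_R0_even_odd (F : nat -> R) N :
  sum_f_R0 F (S (2 * N)) =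
  sum_f_R0 (fun m => F (2 * m)%nat) N + sum_f_R0 (fun m => F (S (2 * m))) N.
Proof.
induction N as [|N IH]; [simpl; ring|].
replace (S (2 * S N)) with (S (S (S (2 * N)))) by lia.
change (sum_f_R0 F (S (S (S (2 * N)))))
  with (sum_f_R0 F (S (2 * N)) + F (S (S (2 * N))) + F (S (S (S (2 * N))))).
rewrite IH; cbn [sum_f_R0].
replace (2 * S N)%nat with (S (S (2 * N))) by lia.
ring.
Qed.

Definition pair_weight (h : nat -> nat -> R) (p : option (nat * nat)) : R :=
  match p with Some (k, m) => h k m | None => 0 end.

(* Even indices carry row [0] and odd indices the remaining rows, halving the budget each time. *)
Lemma sum_pair_weight_le fuel : forall (h : nat -> nat -> R) eps,
  (forall k m, 0 <= h k m) ->
  (forall k M, sum_f_R0 (h k) M <= eps * (/ 2) ^ S k) ->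
  forall N, sum_f_R0 (fun n => pair_weight h (unpair_fuel fuel n)) N <= eps.
Proof.
induction fuel as [|fuel IH]; intros h eps Hh Hrows N.
- assert (0 <= eps) by (specialize (Hh O O); specialize (Hrows O O); simpl in Hrows; lra).
  simpl; rewrite sum_cte; lra.
- assert (Hw : forall n, 0 <= pair_weight h (unpair_fuel (S fuel) n)).
  { intro n; destruct (unpair_fuel _ n) as [[k m]|]; simpl; [apply Hh | lra]. }
  apply Rle_trans with (1 := sum_f_R0_le_more _ N (S (2 * N)) Hw ltac:(lia)).
  rewrite sum_f_R0_even_odd.
  assert (Heven : sum_f_R0 (fun m => pair_weight h (unpair_fuel (S fuel) (2 * m))) N
                  = sum_f_R0 (h O) N).
  { apply sum_eq; intros n _; cbn [unpair_fuel pair_weight].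
    now rewrite Nat.even_even, Nat.div2_double. }
  assert (Hodd : sum_f_R0 (fun m => pair_weight h (unpair_fuel (S fuel) (S (2 * m)))) N
                 = sum_f_R0 (fun n => pair_weight (fun k => h (S k)) (unpair_fuel fuel n)) N).
  { apply sum_eq; intros n _; cbn [unpair_fuel].
    rewrite even_succ_double, Nat.div2_succ_double.
    now destruct (unpair_fuel fuel n) as [[k m]|]. }
  assert (Hrows' : forall k M, sum_f_R0 (h (S k)) M <= eps / 2 * (/ 2) ^ S k)
    by (intros k M; specialize (Hrows (S k) M); simpl in *; lra).
  specialize (IH (fun k => h (S k)) (eps / 2) (fun k => Hh (S k)) Hrows' N).
  specialize (Hrows O N); simpl in Hrows.
  rewrite Heven, Hodd; lra.
Qed.

Lemma H_null_countable_union s (E : nat -> R -> Prop) :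
  (forall k, H_null s (E k)) -> H_null s (fun x => exists k, E k x).
Proof.
intros HE eps delta Heps Hdelta.
destruct (functional_choice
  (fun k (cov : (nat -> R -> Prop) * (nat -> R)) =>
     (forall n, 0 < snd cov n <= delta) /\
     (forall n x y, fst cov n x -> fst cov n y -> Rabs (x - y) <= snd cov n) /\
     (forall x, E k x -> exists n, fst cov n x) /\
     (forall N, sum_f_R0 (fun n => Rpower (snd cov n) s) N <= eps * (/ 2) ^ S k)))
  as [cov Hcov].
{ intro k; destruct (HE k (eps * (/ 2) ^ S k) delta) as (V & r & Hk); auto.
  - apply Rmult_lt_0_compat; [exact Heps | apply pow_lt; lra].
  - now exists (V, r). }
exists (fun n x => match unpair n with Some (k, m) => fst (cov k) m x | None => False end),
       (fun n => match unpair n with Some (k, m) => snd (cov k) m | None => delta end).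
split; [|split; [|split]].
- intro n; destruct (unpair n) as [[k m]|]; [apply (Hcov k) | lra].
- intros n x y; destruct (unpair n) as [[k m]|]; [apply (Hcov k) | tauto].
- intros x [k Hx]; destruct (proj1 (proj2 (proj2 (Hcov k))) x Hx) as [m Hm].
  exists (pair_index k m); unfold unpair; now rewrite unpair_fuel_pair_index by lia.
- intro N.
  set (h k m := Rpower (snd (cov k) m) s).
  replace (sum_f_R0 _ N) with (sum_f_R0 (fun n => pair_weight h (unpair_fuel (S N) n)) N).
  + apply sum_pair_weight_le; [intros; apply Rlt_le, Rpower_gt0 | intros k; apply Hcov].
  + apply sum_eq; intros n Hn; unfold unpair.
    rewrite (unpair_fuel_stable (S n) (S N) n) by lia.
    destruct (unpair_fuel (S N) n) as [[k m]|] eqn:Hp; [reflexivity|].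
    exfalso; exact (unpair_fuel_defined (S N) n ltac:(lia) Hp).
Qed.

Lemma geometric_sum_mul q N : sum_f_R0 (fun n => q ^ n) N * (1 - q) = 1 - q ^ S N.
Proof. induction N as [|N IH]; simpl; [ring|]. rewrite Rmult_plus_distr_r, IH; simpl; ring. Qed.

(* The intervals [[2 - 2q^n, 2 - 2q^(n+1)]] with [q = 1 - t] tile [[0, 2)], and the sum of their squared
   lengths is [4t^2 / (1 - q^2) <= 4t]. *)
Lemma H_null_2_unit_interval : H_null 2 (fun x => 0 <= x <= 1).
Proof.
intros eps delta Heps Hdelta.
set (t := Rmin (Rmin (delta / 2) (eps / 4)) (1 / 2)).
assert (Ht : 0 < t <= delta / 2 /\ t <= eps / 4 /\ t <= 1 / 2).
{ unfold t; repeat split; repeat apply Rmin_glb_lt; try lra;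
    eauto using Rle_trans, Rmin_l, Rmin_r. }
clearbody t; set (q := 1 - t).
assert (Hq : 1 / 2 <= q < 1) by (unfold q; lra).
assert (Hqn : forall n, 0 < q ^ n <= 1).
{ intro n; split; [apply pow_lt; lra|].
  rewrite <- (pow1 n); apply pow_incr; lra. }
exists (fun n x => 2 - 2 * q ^ n <= x <= 2 - 2 * q ^ S n), (fun n => 2 * t * q ^ n).
split; [|split; [|split]].
- intro n; specialize (Hqn n); split; nra.
- intros n x y Hx Hy; specialize (Hqn n); simpl in *; apply Rabs_le; unfold q in *; nra.
- intros x Hx.
  destruct (pow_lt_1_zero q ltac:(rewrite Rabs_right; lra) (1 / 2) ltac:(lra)) as [N HN].
  specialize (HN (S N) ltac:(lia)); rewrite Rabs_right in HN by (apply Rle_ge, pow_le; lra).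
  assert (Hfirst : forall n, x < 2 - 2 * q ^ S n -> exists m, 2 - 2 * q ^ m <= x <= 2 - 2 * q ^ S m).
  { induction n as [|n IH]; intro Hn.
    - exists O; simpl in *; lra.
    - destruct (Rlt_or_le x (2 - 2 * q ^ S n)); [now apply IH | exists (S n); lra]. }
  apply (Hfirst N); lra.
- intro N.
  assert (Hsq : sum_f_R0 (fun n => Rpower (2 * t * q ^ n) 2) N
                = 4 * t * t * sum_f_R0 (fun n => (q * q) ^ n) N).
  { rewrite scal_sum; apply sum_eq; intros n _; specialize (Hqn n).
    replace 2 with (INR 2) at 2 by (simpl; ring).
    rewrite Rpower_pow by nra; rewrite !Rpow_mult_distr; simpl; ring. }
  rewrite Hsq.
  pose proof (geometric_sum_mul (q * q) N) as Hgeom.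
  assert (0 < (q * q) ^ S N <= 1) by (rewrite Rpow_mult_distr; specialize (Hqn (S N)); nra).
  assert (0 <= sum_f_R0 (fun n => (q * q) ^ n) N)
    by (apply cond_pos_sum; intro n; apply pow_le; nra).
  unfold q in *; nra.
Qed.

Lemma hausdorff_dim_exists (E : R -> Prop) :
  (exists s, 0 <= s /\ H_null s E) -> exists d, hausdorff_dim E d.
Proof.
intros [s0 Hs0].
destruct (completeness (fun x => 0 <= - x /\ H_null (- x) E)) as [m [Hub Hlub]].
- exists 0; intros x [Hx _]; lra.
- exists (- s0); now rewrite Ropp_involutive.
- exists (- m); split.
  + intros s Hs; enough (- s <= m) by lra.
    apply Hub; now rewrite Ropp_involutive.
  + intros b Hb; enough (m <= - b) by lra.
    apply Hlub; intros x Hx; specialize (Hb _ Hx); lra.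
Qed.

Lemma hausdorff_dim_null_equiv (E F : R -> Prop) d :
  (forall s, H_null s E <-> H_null s F) ->
  hausdorff_dim F d -> hausdorff_dim E d.
Proof.
intros HEF [Hlow Hgreatest]; split.
- intros s [Hs HE]; apply Hlow; split; [exact Hs | now apply HEF].
- intros b Hb; apply Hgreatest; intros s [Hs HF]; apply Hb; split; [exact Hs | now apply HEF].
Qed.

Lemma ifs_affine lam i y : ifs lam i y = lam * y + ifs lam i 0.
Proof. destruct i as [|[|[|[|i]]]]; simpl; ring. Qed.

Lemma Un_cv_const c : Un_cv (fun _ => c) c.
Proof. intros eps Heps; exists O; intros; unfold Rdist; rewrite Rminus_diag, Rabs_R0; lra. Qed.

Lemma Un_cv_affine u l a b : Un_cv u l -> Un_cv (fun n => a * u n + b) (a * l + b).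
Proof. intro Hu; apply CV_plus; [apply CV_mult; [apply Un_cv_const | exact Hu] | apply Un_cv_const]. Qed.

Definition stail (c : nat -> nat) : nat -> nat := fun n => c (S n).
Definition scons (i : nat) (c : nat -> nat) : nat -> nat :=
  fun n => match n with O => i | S n' => c n' end.

Lemma is_coding_scons lam i c y : (1 <= i <= 4)%nat -> is_coding lam c y ->
  is_coding lam (scons i c) (ifs lam i y).
Proof.
intros Hi [Hdigits Hcv]; split; [intros [|n]; simpl; auto|].
apply (CV_shift _ 1); rewrite ifs_affine.
apply (Un_cv_ext (fun n => lam * comp lam c n 0 + ifs lam i 0)).
- intro n; rewrite Nat.add_1_r; symmetry; apply ifs_affine.
- now apply Un_cv_affine.
Qed.

Lemma is_coding_stail lam c x : lam <> 0 -> is_coding lam c x ->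
  exists y, x = ifs lam (c O) y /\ is_coding lam (stail c) y.
Proof.
intros Hlam [Hdigits Hcv].
exists (/ lam * x + - ifs lam (c O) 0 / lam); split.
- rewrite ifs_affine; field; exact Hlam.
- split; [intro n; apply Hdigits|].
  apply (Un_cv_ext (fun n => / lam * comp lam c (n + 1) 0 + - ifs lam (c O) 0 / lam)).
  + intro n; rewrite Nat.add_1_r; cbn [comp]; rewrite (ifs_affine lam (c O)).
    unfold stail; field; exact Hlam.
  + apply Un_cv_affine; exact (CV_shift' (fun n => comp lam c n 0) 1 x Hcv).
Qed.

Lemma U1_iff lam x :
  U lam 1 x <-> K lam x /\ forall c d, is_coding lam c x -> is_coding lam d x -> seq_eq c d.
Proof.
split.
- intros [HK (l & Hlen & _ & _ & Hall)]; split; [exact HK|].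
  destruct l as [|e [|e' l]]; try discriminate.
  intros c d Hc Hd n.
  destruct (Hall c Hc) as (c' & [<- | []] & Hcc'); destruct (Hall d Hd) as (d' & [<- | []] & Hdd').
  now rewrite Hcc', Hdd'.
- intros [[c Hc] Hunique]; split; [now exists c|].
  exists (c :: nil); split; [reflexivity | split; [|split]].
  + now intros c' [<- | []].
  + intros i j Hij; lia.
  + intros d Hd; exists c; split; [now left | now apply Hunique].
Qed.

Lemma U2_iff lam x :
  U lam 2 x <-> exists c d, is_coding lam c x /\ is_coding lam d x /\ ~ seq_eq c d /\
                 forall e, is_coding lam e x -> seq_eq e c \/ seq_eq e d.
Proof.
split.
- intros [_ (l & Hlen & Hin & Hdistinct & Hall)].
  destruct l as [|c [|d [|e l]]]; try discriminate.
  exists c, d; split; [apply Hin; now left | split; [apply Hin; right; now left | split]].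
  + apply (Hdistinct 0 1)%nat; lia.
  + intros e He; destruct (Hall e He) as (e' & [<- | [<- | []]] & Hee'); auto.
- intros (c & d & Hc & Hd & Hcd & Hall); split; [now exists c|].
  exists (c :: d :: nil); split; [reflexivity | split; [|split]].
  + now intros e [<- | [<- | []]].
  + intros i j Hij; assert (i = 0 /\ j = 1)%nat as [-> ->] by lia; exact Hcd.
  + intros e He; destruct (Hall e He); [exists c | exists d]; simpl; auto.
Qed.

Lemma U1_of_U1_image lam i y : (1 <= i <= 4)%nat -> K lam y -> U lam 1 (ifs lam i y) -> U lam 1 y.
Proof.
intros Hi HK Himg; apply U1_iff in Himg as [_ Hunique]; apply U1_iff; split; [exact HK|].
intros c d Hc Hd n.
exact (Hunique _ _ (is_coding_scons _ _ _ _ Hi Hc) (is_coding_scons _ _ _ _ Hi Hd) (S n)).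
Qed.

Section Codings.

Variable lam : R.
Hypothesis lam_pos : 0 < lam.
Hypothesis lam_lt_quarter : lam < / 4.
(* [f_3 [0,1]] lies below [f_4 [0,1]]: [4 lam - lam^2 < 1 - lam]. *)
Hypothesis lam_gap : 0 < lam ^ 2 - 5 * lam + 1.

Lemma ifs_unit_interval i y : 0 <= y <= 1 -> 0 <= ifs lam i y <= 1.
Proof.
intro Hy; rewrite ifs_affine; assert (0 <= lam * y <= lam) by nra.
destruct i as [|[|[|[|i]]]]; simpl; nra.
Qed.

Lemma coding_unit_interval c x : is_coding lam c x -> 0 <= x <= 1.
Proof.
intros [_ Hcv].
assert (Hcomp : forall n c', 0 <= comp lam c' n 0 <= 1).
{ induction n as [|n IH]; intro c'; simpl; [lra | apply ifs_unit_interval, IH]. }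
split; [apply (@Rle_cv_lim (fun _ => 0) (fun n => comp lam c n 0))
      | apply (@Rle_cv_lim (fun n => comp lam c n 0) (fun _ => 1))];
  try apply Un_cv_const; try exact Hcv; intro n; apply Hcomp.
Qed.

Lemma K_unit_interval x : K lam x -> 0 <= x <= 1.
Proof. intros [c Hc]; exact (coding_unit_interval c x Hc). Qed.

Lemma coding_uncons c x : is_coding lam c x ->
  exists y, 0 <= y <= 1 /\ x = ifs lam (c O) y /\ is_coding lam (stail c) y.
Proof.
intro Hc; destruct (is_coding_stail lam c x ltac:(lra) Hc) as (y & Hx & Hy).
exists y; split; [exact (coding_unit_interval _ _ Hy) | split; assumption].
Qed.

Lemma coding_first_piece c x : is_coding lam c x ->
  (1 <= c O <= 4)%nat /\ ifs lam (c O) 0 <= x <= ifs lam (c O) 0 + lam.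
Proof.
intro Hc; split; [apply (proj1 Hc)|].
destruct (coding_uncons c x Hc) as (y & Hy & -> & _); rewrite (ifs_affine lam (c O) y); nra.
Qed.

Lemma is_coding_peel e i y : is_coding lam e (ifs lam i y) -> e O = i -> is_coding lam (stail e) y.
Proof.
intros He Hi; destruct (coding_uncons e _ He) as (y' & _ & Hy' & Htail).
rewrite Hi, (ifs_affine lam i y), (ifs_affine lam i y') in Hy'.
replace y with y'; [exact Htail|].
apply (Rmult_eq_reg_l lam); lra.
Qed.

Ltac first_piece_cases c :=
  destruct (c O) as [|[|[|[|[|?]]]]]; simpl in *; try lia; try reflexivity; nra.

Lemma first_digit_4 c x : is_coding lam c x -> 1 - lam <= x -> c O = 4%nat.
Proof. intros Hc Hx; pose proof (coding_first_piece c x Hc); first_piece_cases c. Qed.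

Lemma first_digit_1 c x : is_coding lam c x -> x <= lam -> c O = 1%nat.
Proof. intros Hc Hx; pose proof (coding_first_piece c x Hc); first_piece_cases c. Qed.

Lemma first_digits_23 c d x : is_coding lam c x -> is_coding lam d x -> c O <> d O ->
  (c O = 2 /\ d O = 3 \/ c O = 3 /\ d O = 2)%nat.
Proof.
intros Hc Hd Hcd.
pose proof (coding_first_piece c x Hc); pose proof (coding_first_piece d x Hd).
destruct (c O) as [|[|[|[|[|?]]]]], (d O) as [|[|[|[|[|?]]]]]; simpl in *;
  try lia; try tauto; nra.
Qed.

(* [f_1] and [f_4] map [[0,1]] into parts of [K] not covered by any other piece. *)
Lemma U1_image_1_4 i y : (i = 1 \/ i = 4)%nat -> U lam 1 y -> U lam 1 (ifs lam i y).
Proof.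
intros Hi Hy; apply U1_iff in Hy as [[g Hg] Hunique].
assert (Hdigit : forall d, is_coding lam d (ifs lam i y) -> d O = i).
{ intros d Hd; pose proof (coding_unit_interval g y Hg).
  destruct Hi as [-> | ->]; [apply (first_digit_1 d _ Hd) | apply (first_digit_4 d _ Hd)];
    simpl; nra. }
apply U1_iff; split.
- exists (scons i g); apply is_coding_scons; [lia | exact Hg].
- intros c d Hc Hd [|n]; [now rewrite (Hdigit c Hc), (Hdigit d Hd)|].
  exact (Hunique _ _ (is_coding_peel c i y Hc (Hdigit c Hc))
                     (is_coding_peel d i y Hd (Hdigit d Hd)) n).
Qed.

Lemma overlap_identity z : ifs lam 2 (ifs lam 4 z) = ifs lam 3 (ifs lam 1 z).
Proof. simpl; ring. Qed.

Lemma U2_overlap_image z : U lam 1 z -> U lam 2 (ifs lam 2 (ifs lam 4 z)).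
Proof.
intro Hz; apply U1_iff in Hz as [[g Hg] Hunique].
pose proof (coding_unit_interval g z Hg).
apply U2_iff; exists (scons 2 (scons 4 g)), (scons 3 (scons 1 g)).
split; [|split; [|split]].
- apply is_coding_scons; [lia|]; apply is_coding_scons; [lia | exact Hg].
- rewrite overlap_identity.
  apply is_coding_scons; [lia|]; apply is_coding_scons; [lia | exact Hg].
- intro Hsame; discriminate (Hsame O).
- intros e He.
  destruct (coding_first_piece e _ He) as [He0 Hpos]; rewrite ifs_affine in Hpos.
  destruct (e O) as [|[|[|[|[|k]]]]] eqn:Hd; simpl in Hpos; try lia; try nra.
  + left; assert (He1 : is_coding lam (stail e) (ifs lam 4 z)) by now apply (is_coding_peel e 2).
    assert (Hd1 : stail e O = 4%nat) by (apply (first_digit_4 _ _ He1); simpl; nra).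
    pose proof (is_coding_peel _ 4 z He1 Hd1) as He2.
    intros [|[|n]]; [exact Hd | exact Hd1 | exact (Hunique _ _ He2 Hg n)].
  + right; rewrite overlap_identity in He.
    assert (He1 : is_coding lam (stail e) (ifs lam 1 z)) by now apply (is_coding_peel e 3).
    assert (Hd1 : stail e O = 1%nat) by (apply (first_digit_1 _ _ He1); simpl; nra).
    pose proof (is_coding_peel _ 1 z He1 Hd1) as He2.
    intros [|[|n]]; [exact Hd | exact Hd1 | exact (Hunique _ _ He2 Hg n)].
Qed.

Definition overlap_copy (n : nat) (x : R) : Prop :=
  exists w z, U lam 1 z /\ x = comp lam w n (ifs lam 2 (ifs lam 4 z)).

(* The only codings of a point of [U_2] starting with different digits are [2 4 g] and [3 1 g]. *)
Lemma U2_split_at_first_digit x c d :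
  is_coding lam c x -> is_coding lam d x -> c O = 2%nat -> d O = 3%nat ->
  (forall e, is_coding lam e x -> seq_eq e c \/ seq_eq e d) -> overlap_copy 0 x.
Proof.
intros Hc Hd Hc0 Hd0 Hall.
destruct (coding_uncons c x Hc) as (y & Hy & Hxy & Hcy).
destruct (coding_uncons d x Hd) as (y' & Hy' & Hxy' & _).
rewrite Hc0 in Hxy; rewrite Hd0, Hxy in Hxy'; simpl in Hxy'.
assert (Hc1 : stail c O = 4%nat) by (apply (first_digit_4 _ _ Hcy); nra).
destruct (coding_uncons _ y Hcy) as (z & _ & Hyz & Hcz); rewrite Hc1 in Hyz.
exists (fun _ => O), z; split; [|simpl; now rewrite Hxy, Hyz].
apply U1_iff; split; [now exists (stail (stail c))|].
assert (Hz : forall g, is_coding lam g z -> seq_eq g (stail (stail c))).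
{ intros g Hg.
  assert (Hx : is_coding lam (scons 2 (scons 4 g)) x).
  { rewrite Hxy, Hyz; apply is_coding_scons; [lia|]; apply is_coding_scons; [lia | exact Hg]. }
  destruct (Hall _ Hx) as [Hsame | Hsame].
  - intro n; exact (Hsame (S (S n))).
  - specialize (Hsame O); simpl in Hsame; congruence. }
intros g h Hg Hh n; now rewrite (Hz g Hg n), (Hz h Hh n).
Qed.

Lemma U2_first_digits_differ x c d :
  is_coding lam c x -> is_coding lam d x -> c O <> d O ->
  (forall e, is_coding lam e x -> seq_eq e c \/ seq_eq e d) -> overlap_copy 0 x.
Proof.
intros Hc Hd Hcd Hall.
destruct (first_digits_23 c d x Hc Hd Hcd) as [[Hc0 Hd0] | [Hc0 Hd0]].
- exact (U2_split_at_first_digit x c d Hc Hd Hc0 Hd0 Hall).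
- apply (U2_split_at_first_digit x d c Hd Hc Hd0 Hc0).
  intros e He; destruct (Hall e He); auto.
Qed.

Lemma U2_overlap_copy_from n : forall x c d,
  is_coding lam c x -> is_coding lam d x -> c n <> d n ->
  (forall e, is_coding lam e x -> seq_eq e c \/ seq_eq e d) -> exists m, overlap_copy m x.
Proof.
induction n as [|n IH]; intros x c d Hc Hd Hcd Hall;
  (destruct (Nat.eq_dec (c O) (d O)) as [Hsame | Hdiff];
   [| exists O; exact (U2_first_digits_differ x c d Hc Hd Hdiff Hall)]);
  [contradiction|].
destruct (coding_uncons c x Hc) as (y & _ & Hxy & Hcy).
assert (Hdy : is_coding lam (stail d) y) by (apply (is_coding_peel d (c O)); congruence).
destruct (IH y (stail c) (stail d) Hcy Hdy Hcd) as (m & w & z & Hz & Hyz).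
{ intros e He.
  assert (Hx : is_coding lam (scons (c O) e) x)
    by (rewrite Hxy; apply is_coding_scons; [apply (proj1 Hc) | exact He]).
  destruct (Hall _ Hx) as [Hs | Hs]; [left | right]; intro k; exact (Hs (S k)). }
exists (S m), (scons (c O) w), z; split; [exact Hz|]; now rewrite Hxy, Hyz.
Qed.

Lemma U2_subset_overlap_copies x : U lam 2 x -> exists m, overlap_copy m x.
Proof.
intro Hx; apply U2_iff in Hx as (c & d & Hc & Hd & Hcd & Hall).
apply not_all_ex_not in Hcd as [n Hn].
exact (U2_overlap_copy_from n x c d Hc Hd Hn Hall).
Qed.

Lemma H_null_overlap_copy s n : H_null s (U lam 1) -> H_null s (overlap_copy n).
Proof.
intro HU; induction n as [|n IH].
- eapply H_null_subset; [|exact (H_null_affine_image s (lam * lam) (3 * lam - lam ^ 2) _ ltac:(nra) HU)].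
  intros x (w & z & Hz & ->); exists z; split; [exact Hz | simpl; ring].
- eapply H_null_subset;
    [|exact (H_null_countable_union s (fun k x => exists y, overlap_copy n y /\ x = lam * y + ifs lam k 0)
               (fun k => H_null_affine_image s lam _ _ lam_pos IH))].
  intros x (w & z & Hz & ->); exists (w O), (comp lam (stail w) n (ifs lam 2 (ifs lam 4 z))).
  split; [now exists (stail w), z | cbn [comp]; apply ifs_affine].
Qed.

Lemma H_null_U2_iff_U1 s : H_null s (U lam 2) <-> H_null s (U lam 1).
Proof.
split; intro Hnull.
- eapply H_null_subset;
    [|exact (H_null_affine_image s (/ (lam * lam)) (- (3 * lam - lam ^ 2) / (lam * lam)) _
               ltac:(apply Rinv_0_lt_compat; nra) Hnull)].
  intros z Hz; exists (ifs lam 2 (ifs lam 4 z)); split; [now apply U2_overlap_image|].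
  simpl; field; lra.
- eapply H_null_subset; [|exact (H_null_countable_union s _ (fun n => H_null_overlap_copy s n Hnull))].
  exact U2_subset_overlap_copies.
Qed.

Lemma U1_translate_iff x :
  U lam 1 x /\ U lam 1 (x - (1 - lam)) <-> U lam 1 x /\ forall c, is_coding lam c x -> c O = 4%nat.
Proof.
split; intros [Hx Hrest]; split; try exact Hx.
- intros c Hc; apply (first_digit_4 c x Hc).
  pose proof (K_unit_interval _ (proj1 Hrest)); lra.
- destruct (proj1 Hx) as [c Hc].
  destruct (coding_uncons c x Hc) as (y & _ & Hxy & Hcy); rewrite (Hrest c Hc) in Hxy.
  assert (Hy : U lam 1 y).
  { apply (U1_of_U1_image lam 4); [lia | now exists (stail c) | now rewrite <- Hxy]. }
  replace (x - (1 - lam)) with (ifs lam 1 y) by (rewrite Hxy; simpl; ring).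
  apply U1_image_1_4; [now left | exact Hy].
Qed.

Lemma H_null_U1_translate_iff_U1 s :
  H_null s (fun x => U lam 1 x /\ U lam 1 (x - (1 - lam))) <-> H_null s (U lam 1).
Proof.
split; intro Hnull.
- eapply H_null_subset;
    [|exact (H_null_affine_image s (/ lam) (- (1 - lam) / lam) _
               ltac:(now apply Rinv_0_lt_compat) Hnull)].
  intros z Hz; exists (ifs lam 4 z); split; [|simpl; field; lra].
  split; [apply U1_image_1_4; [now right | exact Hz]|].
  replace (ifs lam 4 z - (1 - lam)) with (ifs lam 1 z) by (simpl; ring).
  apply U1_image_1_4; [now left | exact Hz].
- eapply H_null_subset; [|exact (H_null_affine_image s 1 (1 - lam) _ Rlt_0_1 Hnull)].
  intros x [_ Hx]; exists (x - (1 - lam)); split; [exact Hx | ring].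
Qed.

End Codings.

Theorem lemma2p26 (lam : R) (hlam0 : 0 < lam) (hlam1 : lam < (5 - sqrt 21) / 2) :
  (exists d : R,
     hausdorff_dim (U lam 2) d /\
     hausdorff_dim (fun x => U lam 1 x /\ U lam 1 (x - (1 - lam))) d /\
     hausdorff_dim (U lam 1) d) /\
  (forall x : R,
     (U lam 1 x /\ U lam 1 (x - (1 - lam))) <->
     (U lam 1 x /\ forall c, is_coding lam c x -> c O = 4%nat)).
Proof.
assert (Hsqrt := sqrt_sqrt 21 ltac:(lra)); assert (Hsqrt_pos := sqrt_pos 21).
assert (Hquarter : lam < / 4) by nra.
assert (Hgap : 0 < lam ^ 2 - 5 * lam + 1) by nra.
split; [|exact (U1_translate_iff lam hlam0 Hquarter Hgap)].
destruct (hausdorff_dim_exists (U lam 1)) as [d Hd].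
{ exists 2; split; [lra|].
  apply (H_null_subset _ _ _ (fun x Hx => K_unit_interval lam hlam0 Hquarter x (proj1 Hx))).
  exact H_null_2_unit_interval. }
exists d; split; [|split; [|exact Hd]].
- apply (hausdorff_dim_null_equiv _ (U lam 1) d); [|exact Hd].
  intro s; exact (H_null_U2_iff_U1 lam hlam0 Hquarter Hgap s).
- apply (hausdorff_dim_null_equiv _ (U lam 1) d); [|exact Hd].
  intro s; exact (H_null_U1_translate_iff_U1 lam hlam0 Hquarter Hgap s).
Qed.
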